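(* Let $V=\{(y,x)\in M:\max_{1\le i\le d}e^{-\lambda_iy/2}|x_i|\le1\}$. There exists a constant $C_V>0$ such that $$HB_{\xi_-}(-C_V)\subset V\cap\{y\le0\}\subset HB_{\xi_-}(C_V).$$ In particular the set $\mathcal{H}=\partial(V\cap\{y\le0\})$ lies in the region between the horospheres $H_{\xi_-}(-C_V)$ and $H_{\xi_-}(C_V)$.
   Context: Let $d\ge1$, $0<\lambda_1\le\cdots\le\lambda_d$, and $M$ be $\mathbb{R}^{d+1}$ with coordinates $(y,x)$ and metric $g=dy^2+\sum_{i=1}^d e^{-2\lambda_i y}dx_i^2$. The boundary at infinity is $\partial M=\{\xi_+\}\cup\mathbb{R}^d$, where $\xi_+$ is the common limit as $t\to+\infty$ of the vertical geodesics $t\mapsto(t,x)$ and $x\in\mathbb{R}^d$ is the limit of $t\mapsto(t,x)$ as $t\to-\infty$; $\xi_-$ denotes the point $0\in\mathbb{R}^d\subset\partial M$. With $o=(0,0)$ and $\alpha$ the unit-speed geodesic ray from $o$ to $\xi$, $b_\xi(p)=\lim_{s\to\infty}(\mathrm{dist}(\alpha(s),p)-s)$; $H_\xi(t)=\{b_\xi=t\}$ and $HB_\xi(t)=\{b_\xi\le t\}$. *)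

From Stdlib Require Import Reals Lra.
From Coquelicot Require Import Coquelicot.
Open Scope R_scope.

(* A point of M = R^{d+1} is a pair (y, x); x : nat -> R, and only the
   coordinates x 0, ..., x (d-1) are relevant (the others are ignored by
   every definition below). *)
Definition point := (R * (nat -> R))%type.

(* Riemannian speed of a curve (gy, gx) at time t for the metric
   g = dy^2 + sum_{i<d} e^{-2 lam_i y} dx_i^2. *)
Definition speed (d : nat) (lam : nat -> R) (gy : R -> R) (gx : nat -> R -> R)
  (t : R) : R :=
  sqrt ((Derive gy t) ^ 2 +
        sum_n (fun i => exp (-2 * lam i * gy t) * (Derive (gx i) t) ^ 2) (d - 1)).

Definition C1_curve (d : nat) (gy : R -> R) (gx : nat -> R -> R) : Prop :=
  (forall t, ex_derive gy t /\ continuous (Derive gy) t) /\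
  (forall i, (i < d)%nat -> forall t, ex_derive (gx i) t /\ continuous (Derive (gx i)) t).

Definition curve_length (d : nat) (lam : nat -> R) (gy : R -> R) (gx : nat -> R -> R) : R :=
  RInt (speed d lam gy gx) 0 1.

Definition rdist (d : nat) (lam : nat -> R) (p q : point) : Rbar :=
  Glb_Rbar (fun L => exists (gy : R -> R) (gx : nat -> R -> R),
     C1_curve d gy gx /\
     gy 0 = fst p /\ (forall i, (i < d)%nat -> gx i 0 = snd p i) /\
     gy 1 = fst q /\ (forall i, (i < d)%nat -> gx i 1 = snd q i) /\
     L = curve_length d lam gy gx).

(* o = (0,0); the unit-speed geodesic ray from o to xi_- = 0 in R^d is
   s |-> (-s, 0).  Busemann function of xi_-:
   b(p) = lim_{s -> +oo} (dist(alpha(s), p) - s). *)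
Definition origin_ray (s : R) : point := (- s, fun _ => 0).

Definition busemann_xi_minus (d : nat) (lam : nat -> R) (p : point) : Rbar :=
  Lim (fun s => real (rdist d lam (origin_ray s) p) - s) p_infty.

Definition horoball_xi_minus (d : nat) (lam : nat -> R) (t : R) (p : point) : Prop :=
  Rbar_le (busemann_xi_minus d lam p) t.

Definition Vset (d : nat) (lam : nat -> R) (p : point) : Prop :=
  forall i, (i < d)%nat -> exp (- lam i * fst p / 2) * Rabs (snd p i) <= 1.

Definition Vneg (d : nat) (lam : nat -> R) (p : point) : Prop :=
  Vset d lam p /\ fst p <= 0.

(* Topological boundary in the Euclidean topology of R^{d+1}
   (sup-norm balls on the relevant coordinates). *)
Definition near_set (d : nat) (S : point -> Prop) (p : point) : Prop :=
  forall eps, 0 < eps -> exists q, S q /\ Rabs (fst q - fst p) < eps /\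
    (forall i, (i < d)%nat -> Rabs (snd q i - snd p i) < eps).

Definition boundary (d : nat) (S : point -> Prop) (p : point) : Prop :=
  near_set d S p /\ near_set d (fun q => ~ S q) p.

(* A curve from (-s, 0) to (y, x) has length L >= s + y, so b_{xi_-}(y, x) >= y.  Moving in
   the x_i direction is cheap only high up: |x_i| is at most the integral of
   e^{lam_i y(t)} |gamma'(t)|, and the height at arclength l is at most
   min (-s + l, y + L - l); comparing with the derivative of an arctangent bounds that
   integral by (2 pi / lam_i) e^{lam_i (L - s + y) / 2}.  Hence a point that is wide in some
   x_i direction, |x_i| > e^{lam_i (y - 1) / 2} / 2, has b >= -(1 + 32 / lam_i^2).
   Conversely, if y <= 1 and |x_i| <= 2 e^{lam_i (y + 1) / 2} for all i, climbing to height
   (y + 1) / 2, moving horizontally there and descending to y costs at most s + 2 + 4 d, so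
   b <= 2 + 4 d.  Points of V /\ {y <= 0} are narrow, points outside it are wide or have
   y > 0, and a boundary point is close to points of both kinds. *)

From Stdlib Require Import Reals Lra Lia Classical.
From Coquelicot Require Import Coquelicot.
Open Scope R_scope.

Lemma continuous_Rplus (f g : R -> R) x :
  continuous f x -> continuous g x -> continuous (fun t => f t + g t) x.
Proof. exact (continuous_plus f g x). Qed.

Lemma continuous_Rmult (f g : R -> R) x :
  continuous f x -> continuous g x -> continuous (fun t => f t * g t) x.
Proof. exact (continuous_mult f g x). Qed.

Lemma continuous_Rminus (f g : R -> R) x :
  continuous f x -> continuous g x -> continuous (fun t => f t - g t) x.
Proof. exact (continuous_minus f g x). Qed.

Lemma continuous_Rconst (c x : R) : continuous (fun _ : R => c) x.
Proof. exact (continuous_const c x). Qed.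

Lemma continuous_Rid (x : R) : continuous (fun t : R => t) x.
Proof. exact (continuous_id x). Qed.

Lemma continuous_Rpow (f : R -> R) n x : continuous f x -> continuous (fun t => f t ^ n) x.
Proof.
  intros Hf. induction n as [|n IH]; cbn.
  - apply continuous_Rconst.
  - apply continuous_Rmult; assumption.
Qed.

Create HintDb rcont.
#[export] Hint Resolve continuous_Rplus continuous_Rmult continuous_Rminus continuous_Rconst
  continuous_Rid continuous_Rpow continuous_Rabs_comp continuous_exp_comp : rcont.

Lemma ex_derive_Rcontinuous (f : R -> R) t : ex_derive f t -> continuous f t.
Proof. apply (ex_derive_continuous (K := R_AbsRing) (V := R_NormedModule)). Qed.

Lemma ex_RInt_Rcontinuous (f : R -> R) a b : (forall t, continuous f t) -> ex_RInt f a b.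
Proof. intros Hf. apply (ex_RInt_continuous (V := R_CompleteNormedModule)); intros; apply Hf. Qed.

Lemma is_derive_RInt_Rcontinuous (f : R -> R) a t :
  (forall t, continuous f t) -> is_derive (fun t => RInt f a t) t (f t).
Proof.
  intros Hf. apply (is_derive_RInt f _ a t); [|apply Hf].
  apply filter_forall; intros b. apply (RInt_correct (V := R_CompleteNormedModule)).
  apply ex_RInt_Rcontinuous, Hf.
Qed.

Lemma C1_of_is_derive (f f' : R -> R) t :
  (forall t, is_derive f t (f' t)) -> (forall t, continuous f' t) ->
  ex_derive f t /\ continuous (Derive f) t.
Proof.
  intros Hf Hc. split; [eexists; apply Hf|].
  apply (continuous_ext f'); [|apply Hc].
  intros; symmetry; apply is_derive_unique, Hf.
Qed.

Lemma exp_le_exp_compat a b : a <= b -> exp a <= exp b.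
Proof. intros [H| ->]; [left; apply exp_increasing|]; lra. Qed.

Lemma exp_Ropp_mul_exp a : exp (- a) * exp a = 1.
Proof. rewrite <- exp_plus, Rplus_opp_l. apply exp_0. Qed.

Lemma sqrt_sum_sq_le a c S :
  0 <= c -> 0 <= S -> sqrt (a ^ 2 + c ^ 2 * S) <= Rabs a + c * sqrt S.
Proof.
  intros Hc HS. pose proof (Rabs_pos a). pose proof (sqrt_pos S).
  rewrite <- (sqrt_pow2 (Rabs a + c * sqrt S)) by nra.
  apply sqrt_le_1_alt. rewrite <- (pow2_abs a).
  pose proof (pow2_sqrt S HS).
  pose proof (Rmult_le_pos _ _ (Rabs_pos a) (Rmult_le_pos _ _ Hc (sqrt_pos S))).
  nra.
Qed.

Lemma sum_n_nonneg (F : nat -> R) n : (forall i, 0 <= F i) -> 0 <= sum_n F n.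
Proof. intros HF. rewrite sum_n_Reals. apply cond_pos_sum, HF. Qed.

Lemma sum_n_exp_sq_nonneg (a b : nat -> R) n : 0 <= sum_n (fun i => exp (a i) * b i ^ 2) n.
Proof.
  apply sum_n_nonneg. intros i. apply Rmult_le_pos; [left; apply exp_pos | apply pow2_ge_0].
Qed.

Lemma sum_n_Rmult_l c (F : nat -> R) n : sum_n (fun i => c * F i) n = c * sum_n F n.
Proof. exact (sum_n_mult_l c F n). Qed.

Lemma sum_n_ge_term (F : nat -> R) n i :
  (forall j, 0 <= F j) -> (i <= n)%nat -> F i <= sum_n F n.
Proof.
  intros HF Hi. induction n as [|n IH].
  - replace i with 0%nat by lia. rewrite sum_O. lra.
  - rewrite sum_Sn. change (plus (sum_n F n) (F (S n))) with (sum_n F n + F (S n)).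
    destruct (Nat.eq_dec i (S n)) as [-> | Hne].
    + pose proof (sum_n_nonneg F n HF). lra.
    + pose proof (HF (S n)). assert (F i <= sum_n F n) by (apply IH; lia). lra.
Qed.

Lemma continuous_sum_n (F : nat -> R -> R) n t :
  (forall i, (i <= n)%nat -> continuous (F i) t) ->
  continuous (fun t => sum_n (fun i => F i t) n) t.
Proof.
  induction n as [|n IH]; intros HF.
  - apply (continuous_ext (F 0%nat)); [intros; rewrite sum_O; auto | apply HF; lia].
  - apply (continuous_ext (fun t => sum_n (fun i => F i t) n + F (S n) t)).
    + intros; rewrite sum_Sn; auto.
    + apply continuous_Rplus; [apply IH; intros|]; apply HF; lia.
Qed.

Lemma ex_pos_le_all (n : nat) (f : nat -> R) :
  (forall i, (i < n)%nat -> 0 < f i) ->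
  exists eps, 0 < eps /\ forall i, (i < n)%nat -> eps <= f i.
Proof.
  induction n as [|n IH]; intros Hf.
  - exists 1. split; [lra | intros; lia].
  - destruct IH as (eps & Heps & Hle); [intros; apply Hf; lia|].
    exists (Rmin eps (f n)). split; [apply Rmin_glb_lt; auto|].
    intros i Hi. destruct (Nat.eq_dec i n) as [-> | Hne]; [apply Rmin_r|].
    eapply Rle_trans; [apply Rmin_l | apply Hle; lia].
Qed.

(* [clamp01 w = min 1 (max 0 w)]; on [0,1], [bump] is the derivative of [3 w^2 - 2 w^3],
   so [smoothstep] is a C^1 step from 0 (on [u <= 0]) to 1 (on [u >= 1]). *)
Definition clamp01 (w : R) : R := (Rabs w - Rabs (w - 1) + 1) / 2.
Definition bump (w : R) : R := 6 * clamp01 w * (1 - clamp01 w).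
Definition smoothstep (u : R) : R := RInt bump 0 u.

Lemma bump_continuous w : continuous bump w.
Proof. unfold bump, clamp01, Rdiv. auto 10 with rcont. Qed.

Lemma continuous_bump_comp (f : R -> R) t : continuous f t -> continuous (fun t => bump (f t)) t.
Proof. intros Hf. apply (continuous_comp f bump); [exact Hf | apply bump_continuous]. Qed.
#[export] Hint Resolve continuous_bump_comp : rcont.

Lemma bump_outside w : w <= 0 \/ 1 <= w -> bump w = 0.
Proof.
  unfold bump, clamp01; intros [H|H].
  - rewrite (Rabs_left1 w), (Rabs_left1 (w - 1)) by lra. lra.
  - rewrite (Rabs_pos_eq w), (Rabs_pos_eq (w - 1)) by lra. lra.
Qed.

Lemma bump_inside w : 0 <= w <= 1 -> bump w = 6 * w * (1 - w).
Proof.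
  intros H. unfold bump, clamp01.
  rewrite (Rabs_pos_eq w), (Rabs_left1 (w - 1)) by lra. field.
Qed.

Lemma bump_nonneg w : 0 <= bump w.
Proof.
  destruct (Rle_lt_dec w 0); [rewrite bump_outside; lra|].
  destruct (Rle_lt_dec 1 w); [rewrite bump_outside; lra|].
  rewrite bump_inside by lra. apply Rmult_le_pos; lra.
Qed.

Lemma bump_neq0 w : bump w <> 0 -> 0 < w < 1.
Proof.
  intros H. split; apply Rnot_le_lt; intros ?; apply H, bump_outside; lra.
Qed.

Lemma is_derive_smoothstep u : is_derive smoothstep u (bump u).
Proof. apply is_derive_RInt_Rcontinuous, bump_continuous. Qed.

Lemma Derive_smoothstep u : Derive smoothstep u = bump u.
Proof. apply is_derive_unique, is_derive_smoothstep. Qed.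

Lemma ex_derive_smoothstep u : ex_derive smoothstep u.
Proof. eexists; apply is_derive_smoothstep. Qed.

Lemma smoothstep_nonpos u : u <= 0 -> smoothstep u = 0.
Proof.
  intros Hu. unfold smoothstep.
  rewrite (RInt_ext bump (fun _ => 0)), RInt_const.
  - apply Rmult_0_r.
  - intros w. rewrite Rmax_left by lra. intros. apply bump_outside. lra.
Qed.

Lemma smoothstep_1 : smoothstep 1 = 1.
Proof.
  unfold smoothstep.
  rewrite (RInt_ext bump (fun w => 6 * w * (1 - w))).
  2:{ intros w. rewrite Rmin_left, Rmax_right by lra. intros. apply bump_inside. lra. }
  rewrite (is_RInt_unique _ 0 1 (minus (3 * 1 ^ 2 - 2 * 1 ^ 3) (3 * 0 ^ 2 - 2 * 0 ^ 3))).
  - cbn. unfold minus, plus, opp; cbn. ring.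
  - apply (is_RInt_derive (fun w => 3 * w ^ 2 - 2 * w ^ 3)).
    + intros. auto_derive; [easy | ring].
    + intros. auto 10 with rcont.
Qed.

Lemma smoothstep_ge1 u : 1 <= u -> smoothstep u = 1.
Proof.
  intros Hu. unfold smoothstep.
  rewrite <- (RInt_Chasles bump 0 1 u) by apply ex_RInt_Rcontinuous, bump_continuous.
  fold (smoothstep 1). rewrite smoothstep_1.
  rewrite (RInt_ext bump (fun _ => 0)), RInt_const.
  - cbn. unfold plus, scal, mult; cbn. ring.
  - intros w. rewrite Rmin_left by lra. intros. apply bump_outside. lra.
Qed.

Lemma RInt_le_atan_range (f h h' : R -> R) (K a b : R) :
  a <= b -> 0 <= K ->
  (forall t, is_derive h t (h' t)) -> (forall t, continuous h' t) ->
  (forall t, continuous f t) ->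
  (forall t, a <= t <= b -> f t <= K * (h' t / (1 + h t ^ 2))) ->
  RInt f a b <= K * PI.
Proof.
  intros Hab HK Hh Hh' Hf Hbound.
  set (g t := K * (h' t / (1 + h t ^ 2))).
  assert (Hden : forall t, 1 + h t ^ 2 <> 0) by (intros t; pose proof (pow2_ge_0 (h t)); lra).
  assert (Hg : forall t, continuous g t).
  { intros t. unfold g, Rdiv. apply continuous_Rmult; [auto 10 with rcont|].
    apply continuous_Rmult; [auto|]. apply continuous_Rinv_comp; [|apply Hden].
    apply continuous_Rplus; [auto 10 with rcont|]. apply continuous_Rpow.
    apply ex_derive_Rcontinuous. eexists; apply Hh. }
  assert (Hatan : is_RInt g a b (minus (K * atan (h b)) (K * atan (h a)))).
  { apply (is_RInt_derive (fun t => K * atan (h t))); [intros t _|intros; apply Hg].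
    auto_derive; [eexists; apply Hh|].
    erewrite is_derive_unique; [|apply Hh].
    unfold g. pose proof (Hden t). cbn in *. field. lra. }
  apply Rle_trans with (RInt g a b).
  - apply RInt_le; auto using ex_RInt_Rcontinuous. intros; apply Hbound; lra.
  - rewrite (is_RInt_unique _ _ _ _ Hatan). unfold minus, plus, opp; cbn.
    pose proof (atan_bound (h a)); pose proof (atan_bound (h b)). nra.
Qed.

Lemma atan_weight_bound (A F E c u w l : R) :
  0 < A -> 0 < c -> 0 < u -> 0 <= w -> 0 < l ->
  c * c * E = F -> A <= F * u -> A * u <= E ->
  A * w <= 2 * F / (c * l) * (c * (l * w * u) / (1 + (c * u) ^ 2)).
Proof.
  intros HA Hc Hu Hw Hl HcE HAF HAE.
  assert (Hden : 0 < 1 + (c * u) ^ 2) by (pose proof (pow2_ge_0 (c * u)); lra).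
  replace (2 * F / (c * l) * (c * (l * w * u) / (1 + (c * u) ^ 2)))
    with (w * (2 * F * u / (1 + (c * u) ^ 2))) by (field; lra).
  rewrite (Rmult_comm A). apply Rmult_le_compat_l; [assumption|].
  apply Rmult_le_reg_r with (1 + (c * u) ^ 2); [assumption|].
  unfold Rdiv. rewrite Rmult_assoc, Rinv_l, Rmult_1_r by lra.
  (* A c^2 u^2 = (A u) (c^2 u) <= E c^2 u = F u *)
  assert (A * u * (c * c * u) <= E * (c * c * u)) by (apply Rmult_le_compat_r; [nra | lra]).
  nra.
Qed.

Lemma Rabs_increment_le (f w : R -> R) a b :
  a <= b -> (forall t, ex_derive f t /\ continuous (Derive f) t) ->
  (forall t, continuous w t) -> (forall t, Rabs (Derive f t) <= w t) ->
  Rabs (f b - f a) <= RInt w a b.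
Proof.
  intros Hab Hf Hw Hle.
  rewrite <- RInt_Derive by (intros; apply Hf).
  eapply Rle_trans; [apply abs_RInt_le; [lra|apply ex_RInt_Rcontinuous, Hf]|].
  apply RInt_le; [lra | | apply ex_RInt_Rcontinuous, Hw | intros; apply Hle].
  apply ex_RInt_Rcontinuous; intros t. apply continuous_Rabs_comp, Hf.
Qed.

Section CurveLength.

Variables (d : nat) (lam : nat -> R) (gy : R -> R) (gx : nat -> R -> R).
Hypotheses (Hd : (1 <= d)%nat) (HC : C1_curve d gy gx).

Let v := speed d lam gy gx.

Let Derive_gy_C1 t : ex_derive gy t /\ continuous (Derive gy) t.
Proof. apply HC. Qed.

Let Derive_gx_C1 i t : (i < d)%nat -> ex_derive (gx i) t /\ continuous (Derive (gx i)) t.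
Proof. intros Hi. now apply HC. Qed.

Let gy_continuous t : continuous gy t.
Proof. apply ex_derive_Rcontinuous, Derive_gy_C1. Qed.

Lemma speed_continuous t : continuous v t.
Proof.
  unfold v, speed. apply continuous_sqrt_comp, continuous_Rplus.
  - apply continuous_Rpow, Derive_gy_C1.
  - apply (continuous_sum_n (fun i t => exp (-2 * lam i * gy t) * Derive (gx i) t ^ 2)).
    intros i Hi. apply continuous_Rmult; [auto 10 with rcont|].
    apply continuous_Rpow, Derive_gx_C1. lia.
Qed.

Lemma Rabs_Derive_gy_le_speed t : Rabs (Derive gy t) <= v t.
Proof.
  unfold v, speed. rewrite <- (sqrt_pow2 (Rabs _)) by apply Rabs_pos.
  rewrite pow2_abs. apply sqrt_le_1_alt.
  pose proof (sum_n_exp_sq_nonneg (fun i => -2 * lam i * gy t) (fun i => Derive (gx i) t) (d - 1)).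
  lra.
Qed.

Lemma Rabs_Derive_gx_le_speed i t :
  (i < d)%nat -> exp (- lam i * gy t) * Rabs (Derive (gx i) t) <= v t.
Proof.
  intros Hi. unfold v, speed.
  rewrite <- (sqrt_pow2 (exp (- lam i * gy t) * Rabs (Derive (gx i) t)))
    by (apply Rmult_le_pos; [left; apply exp_pos | apply Rabs_pos]).
  apply sqrt_le_1_alt.
  replace ((exp (- lam i * gy t) * Rabs (Derive (gx i) t)) ^ 2)
    with (exp (-2 * lam i * gy t) * Derive (gx i) t ^ 2)
    by (rewrite Rpow_mult_distr, pow2_abs; f_equal; cbn;
        rewrite Rmult_1_r, <- exp_plus; f_equal; ring).
  pose proof (pow2_ge_0 (Derive gy t)).
  enough (exp (-2 * lam i * gy t) * Derive (gx i) t ^ 2 <=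
          sum_n (fun i => exp (-2 * lam i * gy t) * Derive (gx i) t ^ 2) (d - 1)) by lra.
  apply (sum_n_ge_term (fun i => exp (-2 * lam i * gy t) * Derive (gx i) t ^ 2)); [|lia].
  intros j. apply Rmult_le_pos; [left; apply exp_pos | apply pow2_ge_0].
Qed.

Lemma Rabs_gy_increment_le a b : a <= b -> Rabs (gy b - gy a) <= RInt v a b.
Proof.
  intros Hab. apply Rabs_increment_le; auto using speed_continuous, Rabs_Derive_gy_le_speed.
Qed.

Lemma Rabs_gx_increment_le i a b : (i < d)%nat -> a <= b ->
  Rabs (gx i b - gx i a) <= RInt (fun t => exp (lam i * gy t) * v t) a b.
Proof.
  intros Hi Hab. apply Rabs_increment_le; auto.
  - intros t. apply continuous_Rmult; [auto 10 with rcont | apply speed_continuous].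
  - intros t. pose proof (Rabs_Derive_gx_le_speed i t Hi).
    replace (Rabs (Derive (gx i) t))
      with (exp (lam i * gy t) * (exp (- lam i * gy t) * Rabs (Derive (gx i) t)))
      by (rewrite <- Rmult_assoc, <- exp_plus;
          replace (lam i * gy t + - lam i * gy t) with 0 by ring; rewrite exp_0; ring).
    apply Rmult_le_compat_l; [left; apply exp_pos | assumption].
Qed.

Lemma height_le_arclength t : 0 <= t <= 1 ->
  gy t <= gy 0 + RInt v 0 t /\ gy t <= gy 1 + (RInt v 0 1 - RInt v 0 t).
Proof.
  intros Ht.
  assert (Hsplit : RInt v 0 1 = RInt v 0 t + RInt v t 1)
    by (symmetry; apply (RInt_Chasles v); apply ex_RInt_Rcontinuous, speed_continuous).
  pose proof (Rle_abs (gy t - gy 0)). pose proof (Rabs_gy_increment_le 0 t ltac:(lra)).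
  pose proof (Rabs_maj2 (gy 1 - gy t)). pose proof (Rabs_gy_increment_le t 1 ltac:(lra)).
  split; lra.
Qed.

Lemma RInt_exp_height_speed_le l : 0 < l ->
  RInt (fun t => exp (l * gy t) * v t) 0 1 <=
  2 * PI / l * exp (l * (gy 0 + gy 1 + RInt v 0 1) / 2).
Proof.
  intros Hl.
  set (Ltot := RInt v 0 1). set (len t := RInt v 0 t).
  set (F := exp (l * gy 0)). set (E := exp (l * (gy 1 + Ltot))).
  set (c := exp (l * (gy 0 - gy 1 - Ltot) / 2)).
  assert (Hc : 0 < c) by apply exp_pos.
  assert (Hlen : forall t, is_derive len t (v t))
    by (intros; apply is_derive_RInt_Rcontinuous, speed_continuous).
  replace (2 * PI / l * exp (l * (gy 0 + gy 1 + Ltot) / 2)) with (2 * F / (c * l) * PI).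
  2:{ unfold F, c. replace (exp (l * gy 0))
        with (exp (l * (gy 0 - gy 1 - Ltot) / 2) * exp (l * (gy 0 + gy 1 + Ltot) / 2))
        by (rewrite <- exp_plus; f_equal; field).
      field. split; [lra | apply Rgt_not_eq, exp_pos]. }
  apply (RInt_le_atan_range _ (fun t => c * exp (l * len t))
           (fun t => c * (l * v t * exp (l * len t)))).
  - lra.
  - left. apply Rdiv_lt_0_compat; [pose proof (exp_pos (l * gy 0)); unfold F; lra | nra].
  - intros t. auto_derive; [eexists; apply Hlen|].
    erewrite is_derive_unique; [|apply Hlen]. ring.
  - intros t. pose proof (speed_continuous t). apply continuous_Rmult; [auto 10 with rcont|].
    apply continuous_Rmult; [auto 10 with rcont|].
    apply continuous_exp_comp, continuous_Rmult; [auto 10 with rcont|].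
    apply ex_derive_Rcontinuous. eexists; apply Hlen.
  - intros t. apply continuous_Rmult; [auto 10 with rcont | apply speed_continuous].
  - intros t Ht. destruct (height_le_arclength t Ht) as [Hup Hdown]. 
    change (RInt v 0 1) with Ltot in Hdown. change (RInt v 0 t) with (len t) in Hup, Hdown.
    apply (atan_weight_bound _ F E); try apply exp_pos; auto.
    + apply sqrt_pos.
    + unfold c, E, F. rewrite <- !exp_plus. f_equal. field.
    + unfold F. rewrite <- exp_plus. apply exp_le_exp_compat. nra.
    + unfold E. rewrite <- exp_plus. apply exp_le_exp_compat. nra.
Qed.

End CurveLength.

Section ComparisonCurve.

Variables (d : nat) (lam : nat -> R) (s y P : R) (x : nat -> R).

(* Climb from height [-s] to [P] for [t] in [0,1/3], move horizontally at height [P]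
   for [t] in [1/3,2/3], then descend to height [y]. *)
Definition cmp_y (t : R) : R :=
  - s + (P + s) * smoothstep (3 * t) + (y - P) * smoothstep (3 * t - 2).
Definition cmp_x (i : nat) (t : R) : R := x i * smoothstep (3 * t - 1).

Lemma is_derive_cmp_y t :
  is_derive cmp_y t (3 * (P + s) * bump (3 * t) + 3 * (y - P) * bump (3 * t - 2)).
Proof.
  unfold cmp_y. auto_derive; [auto using ex_derive_smoothstep|].
  rewrite !Derive_smoothstep. unfold Rminus. ring.
Qed.

Lemma is_derive_cmp_x i t : is_derive (cmp_x i) t (3 * x i * bump (3 * t - 1)).
Proof.
  unfold cmp_x. auto_derive; [auto using ex_derive_smoothstep|].
  rewrite !Derive_smoothstep. unfold Rminus. ring.
Qed.

Lemma cmp_curve_start : cmp_y 0 = - s /\ forall i, cmp_x i 0 = 0.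
Proof.
  unfold cmp_y, cmp_x. rewrite !smoothstep_nonpos by lra. split; [ring | intros; ring].
Qed.

Lemma cmp_curve_end : cmp_y 1 = y /\ forall i, cmp_x i 1 = x i.
Proof.
  unfold cmp_y, cmp_x. rewrite !smoothstep_ge1 by lra. split; [ring | intros; ring].
Qed.

Lemma cmp_curve_C1 : C1_curve d cmp_y cmp_x.
Proof.
  split; [intros t | intros i _ t].
  - apply (C1_of_is_derive _ _ t is_derive_cmp_y). intros. auto 10 with rcont.
  - apply (C1_of_is_derive _ _ t (is_derive_cmp_x i)). intros. auto 10 with rcont.
Qed.

Let W := sqrt (sum_n (fun i => exp (-2 * lam i * P) * x i ^ 2) (d - 1)).

Let cmp_speed_bound t :=
  3 * (P + s) * bump (3 * t) + 3 * (P - y) * bump (3 * t - 2) + 3 * W * bump (3 * t - 1).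

Lemma cmp_speed_le t : - s <= P -> y <= P -> speed d lam cmp_y cmp_x t <= cmp_speed_bound t.
Proof.
  intros Hs Hy. unfold speed.
  rewrite (is_derive_unique _ _ _ (is_derive_cmp_y t)).
  rewrite (sum_n_ext _ (fun i => (3 * bump (3 * t - 1)) ^ 2 * (exp (-2 * lam i * P) * x i ^ 2))).
  2:{ intros i. match goal with |- ?a = ?b => change (@eq R a b) end.
      rewrite (is_derive_unique _ _ _ (is_derive_cmp_x i t)).
      destruct (Req_dec (bump (3 * t - 1)) 0) as [Hb | Hb]; [rewrite Hb; ring|].
      (* while [cmp_x] moves, the height is [P] *)
      apply bump_neq0 in Hb.
      replace (cmp_y t) with P
        by (unfold cmp_y; rewrite smoothstep_ge1, smoothstep_nonpos by lra; ring).
      ring. }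
  rewrite sum_n_Rmult_l.
  pose proof (bump_nonneg (3 * t)). pose proof (bump_nonneg (3 * t - 2)).
  pose proof (bump_nonneg (3 * t - 1)).
  eapply Rle_trans; [apply sqrt_sum_sq_le; [lra | apply sum_n_exp_sq_nonneg]|].
  unfold cmp_speed_bound. fold W.
  replace (3 * W * bump (3 * t - 1)) with (3 * bump (3 * t - 1) * W) by ring.
  apply Rplus_le_compat_r, Rabs_le. split; nra.
Qed.

Lemma cmp_curve_length_le : (1 <= d)%nat -> - s <= P -> y <= P ->
  curve_length d lam cmp_y cmp_x <= (P + s) + (P - y) + W.
Proof.
  intros Hd Hs Hy. unfold curve_length.
  assert (Hbound : forall t, continuous cmp_speed_bound t)
    by (intros; unfold cmp_speed_bound; auto 10 with rcont).
  apply Rle_trans with (RInt cmp_speed_bound 0 1).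
  - apply RInt_le; [lra | | apply ex_RInt_Rcontinuous, Hbound | intros; apply cmp_speed_le; lra].
    apply ex_RInt_Rcontinuous, (speed_continuous _ _ _ _ Hd cmp_curve_C1).
  - set (G t := (P + s) * smoothstep (3 * t) + (P - y) * smoothstep (3 * t - 2)
                + W * smoothstep (3 * t - 1)).
    rewrite (is_RInt_unique cmp_speed_bound 0 1 (minus (G 1) (G 0))).
    + unfold G.
      rewrite (smoothstep_nonpos (3 * 0)), (smoothstep_nonpos (3 * 0 - 2)),
        (smoothstep_nonpos (3 * 0 - 1)), (smoothstep_ge1 (3 * 1)), (smoothstep_ge1 (3 * 1 - 2)),
        (smoothstep_ge1 (3 * 1 - 1)) by lra.
      unfold minus, plus, opp; cbn. lra.
    + apply (is_RInt_derive G); [intros t _ | intros; apply Hbound].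
      unfold G, cmp_speed_bound. auto_derive; [auto using ex_derive_smoothstep|].
      rewrite !Derive_smoothstep. unfold Rminus. ring.
Qed.

End ComparisonCurve.

Definition ray_lengths (d : nat) (lam : nat -> R) (s : R) (p : point) (L : R) : Prop :=
  exists (gy : R -> R) (gx : nat -> R -> R),
    C1_curve d gy gx /\
    gy 0 = - s /\ (forall i, (i < d)%nat -> gx i 0 = 0) /\
    gy 1 = fst p /\ (forall i, (i < d)%nat -> gx i 1 = snd p i) /\
    L = curve_length d lam gy gx.

Lemma rdist_origin_ray d lam s p :
  rdist d lam (origin_ray s) p = Glb_Rbar (ray_lengths d lam s p).
Proof. reflexivity. Qed.

Lemma Glb_Rbar_real_bounds (E : R -> Prop) a :
  (forall L, E L -> a <= L) -> (exists L, E L) ->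
  a <= real (Glb_Rbar E) /\ forall L, E L -> real (Glb_Rbar E) <= L.
Proof.
  intros Hlb [L0 HL0]. destruct (Glb_Rbar_correct E) as [Hlow Hgreatest].
  assert (Ha : Rbar_le a (Glb_Rbar E)) by (apply Hgreatest; intros z Hz; apply Hlb, Hz).
  pose proof (Hlow L0 HL0) as Hfinite.
  destruct (Glb_Rbar E) as [r | |]; cbn in *; try contradiction.
  split; [exact Ha | intros L HL; apply (Hlow L HL)].
Qed.

Section RayLengths.

Variables (d : nat) (lam : nat -> R).
Hypothesis Hd : (1 <= d)%nat.

Lemma ray_lengths_ge_height s p L : ray_lengths d lam s p L -> s + fst p <= L.
Proof.
  intros (gy & gx & HC & Hy0 & _ & Hy1 & _ & ->).
  pose proof (Rabs_gy_increment_le d lam gy gx Hd HC 0 1 ltac:(lra)) as H.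
  rewrite Hy0, Hy1 in H. pose proof (Rle_abs (fst p - - s)). unfold curve_length. lra.
Qed.

Lemma ray_lengths_coord_le s p L i : (i < d)%nat -> 0 < lam i ->
  ray_lengths d lam s p L ->
  Rabs (snd p i) <= 2 * PI / lam i * exp (lam i * (L - s + fst p) / 2).
Proof.
  intros Hi Hl (gy & gx & HC & Hy0 & Hx0 & Hy1 & Hx1 & ->).
  rewrite <- (Rminus_0_r (snd p i)), <- Hx1, <- (Hx0 i Hi) by exact Hi.
  eapply Rle_trans; [apply (Rabs_gx_increment_le d lam gy gx Hd HC i 0 1 Hi); lra|].
  eapply Rle_trans; [apply (RInt_exp_height_speed_le d lam gy gx Hd HC _ Hl)|].
  rewrite Hy0, Hy1. unfold curve_length. right.
  rewrite (Rplus_comm (- s + fst p)), <- Rplus_assoc. reflexivity.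
Qed.

Lemma ray_lengths_cmp s p P :
  ray_lengths d lam s p (curve_length d lam (cmp_y s (fst p) P) (cmp_x (snd p))).
Proof.
  destruct (cmp_curve_start s (fst p) P (snd p)) as [Hy0 Hx0].
  destruct (cmp_curve_end s (fst p) P (snd p)) as [Hy1 Hx1].
  exists (cmp_y s (fst p) P), (cmp_x (snd p)).
  split; [apply cmp_curve_C1 | repeat split; auto].
Qed.

(* [Lim f p_infty] is the limit of the sequence [f (INR n)]; [Lim_seq_le_loc] compares
   such limits without requiring convergence. *)
Lemma busemann_ge p g :
  (forall (n : nat) L, ray_lengths d lam (INR n) p L -> INR n + g <= L) ->
  Rbar_le g (busemann_xi_minus d lam p).
Proof.
  intros H. unfold busemann_xi_minus, Lim.
  rewrite <- (Lim_seq_const g). apply Lim_seq_le_loc. exists 0%nat. intros n _. cbn.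
  rewrite rdist_origin_ray.
  destruct (Glb_Rbar_real_bounds (ray_lengths d lam (INR n) p) (INR n + g)) as [Hg _].
  - apply H.
  - eexists; apply (ray_lengths_cmp _ _ 0).
  - lra.
Qed.

Lemma busemann_le p g :
  (exists N : nat, forall n : nat, (N <= n)%nat ->
     exists L, ray_lengths d lam (INR n) p L /\ L <= INR n + g) ->
  Rbar_le (busemann_xi_minus d lam p) g.
Proof.
  intros [N H]. unfold busemann_xi_minus, Lim.
  rewrite <- (Lim_seq_const g). apply Lim_seq_le_loc. exists N. intros n Hn. cbn.
  rewrite rdist_origin_ray.
  destruct (Glb_Rbar_real_bounds (ray_lengths d lam (INR n) p) (INR n + fst p)) as [_ Hglb].
  - apply ray_lengths_ge_height.
  - eexists; apply (ray_lengths_cmp _ _ 0).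
  - destruct (H n Hn) as (L & HL & HLg). pose proof (Hglb L HL). lra.
Qed.

Lemma busemann_ge_height (p : point) : Rbar_le (fst p) (busemann_xi_minus d lam p).
Proof.
  apply busemann_ge. intros n L HL. apply ray_lengths_ge_height, HL.
Qed.

Lemma busemann_ge_of_coord (p : point) i g : (i < d)%nat -> 0 < lam i ->
  2 * PI / lam i * exp (lam i * (g + fst p) / 2) <= Rabs (snd p i) ->
  Rbar_le g (busemann_xi_minus d lam p).
Proof.
  intros Hi Hl Hx. apply busemann_ge. intros n L HL.
  apply Rnot_lt_le. intros HLg.
  pose proof (ray_lengths_coord_le _ _ _ _ Hi Hl HL) as Hle.
  assert (exp (lam i * (L - INR n + fst p) / 2) < exp (lam i * (g + fst p) / 2))
    by (apply exp_increasing; nra).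
  assert (0 < 2 * PI / lam i) by (apply Rdiv_lt_0_compat; [pose proof PI_RGT_0|]; lra).
  nra.
Qed.

Lemma busemann_ge_of_wide (p : point) i : (i < d)%nat -> 0 < lam i ->
  exp (lam i * (fst p - 1) / 2) / 2 < Rabs (snd p i) ->
  Rbar_le (- (1 + 32 / lam i ^ 2)) (busemann_xi_minus d lam p).
Proof.
  intros Hi Hl Hx. apply (busemann_ge_of_coord _ i); auto.
  set (z := 16 / lam i).
  assert (Hz : 0 < z) by (apply Rdiv_lt_0_compat; lra).
  replace (lam i * (- (1 + 32 / lam i ^ 2) + fst p) / 2) with (- z + lam i * (fst p - 1) / 2)
    by (unfold z; field; lra).
  rewrite exp_plus.
  (* [z exp(-z) <= 1] and [2 PI / lam i = (PI / 8) z] with [PI <= 4] *)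
  assert (Hzexp : z * exp (- z) <= 1).
  { rewrite exp_Ropp. apply Rmult_le_reg_r with (exp z); [apply exp_pos|].
    rewrite Rmult_assoc, Rinv_l by (apply Rgt_not_eq, exp_pos).
    pose proof (exp_ineq1_le z). lra. }
  replace (2 * PI / lam i) with (PI / 8 * z) by (unfold z; field; lra).
  pose proof PI_4. pose proof PI_RGT_0. pose proof (exp_pos (lam i * (fst p - 1) / 2)).
  pose proof (exp_pos (- z)).
  assert (PI / 8 * (z * exp (- z)) <= 1 / 2) by nra.
  nra.
Qed.

Lemma busemann_le_of_narrow (p : point) : fst p <= 1 ->
  (forall i, (i < d)%nat -> Rabs (snd p i) <= 2 * exp (lam i * (fst p + 1) / 2)) ->
  Rbar_le (busemann_xi_minus d lam p) (2 + 4 * INR d).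
Proof.
  intros Hy Hx. apply busemann_le.
  set (P := (fst p + 1) / 2).
  set (Z := sum_n (fun i => exp (-2 * lam i * P) * snd p i ^ 2) (d - 1)).
  assert (HZ : Z <= 4 * INR d).
  { unfold Z. rewrite sum_n_Reals.
    replace (4 * INR d) with (sum_f_R0 (fun _ => 4) (d - 1))
      by (rewrite sum_cte; replace (S (d - 1)) with d by lia; ring).
    apply sum_Rle. intros i Hi.
    specialize (Hx i ltac:(lia)). pose proof (Rabs_pos (snd p i)).
    rewrite <- pow2_abs.
    replace 4 with (exp (-2 * lam i * P) * (2 * exp (lam i * P)) ^ 2).
    - apply Rmult_le_compat_l; [left; apply exp_pos|]. apply pow_incr.
      replace (lam i * P) with (lam i * (fst p + 1) / 2) by (unfold P; field). lra.
    - cbn. rewrite Rmult_1_r.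
      replace (-2 * lam i * P) with (- (lam i * P) + - (lam i * P)) by ring.
      rewrite exp_plus. pose proof (exp_Ropp_mul_exp (lam i * P)). nra. }
  assert (HZ0 : 0 <= Z) by apply (sum_n_exp_sq_nonneg (fun i => -2 * lam i * P) (snd p)).
  assert (HsqrtZ : sqrt Z <= 1 + Z)
    by (rewrite <- (sqrt_pow2 (1 + Z)) by lra; apply sqrt_le_1_alt; nra).
  assert (HyP : fst p <= P) by (unfold P; lra).
  assert (HPy : P + (P - fst p) = 1) by (unfold P; field).
  destruct (INR_unbounded (Rabs P)) as [N HN]. exists N. intros n Hn.
  assert (INR N <= INR n) by (apply le_INR, Hn).
  pose proof (Rle_abs (- P)). rewrite Rabs_Ropp in *.
  eexists. split; [apply (ray_lengths_cmp _ _ P)|].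
  eapply Rle_trans; [apply cmp_curve_length_le; auto; lra|].
  fold Z. lra.
Qed.

End RayLengths.

Lemma Vset_iff d lam (p : point) :
  Vset d lam p <-> forall i, (i < d)%nat -> Rabs (snd p i) <= exp (lam i * fst p / 2).
Proof.
  unfold Vset. split; intros H i Hi; specialize (H i Hi);
    replace (- lam i * fst p / 2) with (- (lam i * fst p / 2)) in * by field;
    pose proof (exp_Ropp_mul_exp (lam i * fst p / 2));
    pose proof (exp_pos (lam i * fst p / 2)); pose proof (exp_pos (- (lam i * fst p / 2))).
  - apply Rmult_le_reg_l with (exp (- (lam i * fst p / 2))); lra.
  - replace 1 with (exp (- (lam i * fst p / 2)) * exp (lam i * fst p / 2)).
    apply Rmult_le_compat_l; lra.
Qed.

Lemma not_Vset_wide d lam (q : point) : ~ Vset d lam q ->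
  exists i, (i < d)%nat /\ exp (lam i * fst q / 2) < Rabs (snd q i).
Proof.
  rewrite Vset_iff. intros H. apply not_all_ex_not in H as [i Hi].
  apply imply_to_and in Hi as [Hi Hlt]. exists i. split; [exact Hi | lra].
Qed.

Definition CV (d : nat) (l0 : R) : R := 2 + 4 * INR d + 32 / l0 ^ 2.

Section Horoballs.

Variables (d : nat) (lam : nat -> R) (l0 : R).
Hypotheses (Hd : (1 <= d)%nat) (Hl0 : 0 < l0) (Hlow : forall i, (i < d)%nat -> l0 <= lam i).

Let Hpos i : (i < d)%nat -> 0 < lam i.
Proof. intros Hi. specialize (Hlow i Hi). lra. Qed.

Let wide_const_nonneg : 0 <= 32 / l0 ^ 2.
Proof. apply Rdiv_le_0_compat; nra. Qed.

Let CV_gt : 1 + 32 / l0 ^ 2 + 1 <= CV d l0.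
Proof. unfold CV. pose proof (pos_INR d). lra. Qed.

Let CV_ge : 2 + 4 * INR d <= CV d l0.
Proof. unfold CV. lra. Qed.

Lemma busemann_ge_of_wide_uniform (p : point) i : (i < d)%nat ->
  exp (lam i * (fst p - 1) / 2) / 2 < Rabs (snd p i) ->
  Rbar_le (- (1 + 32 / l0 ^ 2)) (busemann_xi_minus d lam p).
Proof.
  intros Hi Hx. eapply Rbar_le_trans; [|apply (busemann_ge_of_wide d lam Hd p i Hi (Hpos i Hi) Hx)].
  specialize (Hlow i Hi).
  assert (l0 ^ 2 <= lam i ^ 2) by (apply pow_incr; lra).
  assert (32 / lam i ^ 2 <= 32 / l0 ^ 2)
    by (apply Rmult_le_compat_l; [lra | apply Rinv_le_contravar; [nra | assumption]]).
  cbn [Rbar_le]. lra.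
Qed.

Lemma horoball_sub_Vneg (p : point) : horoball_xi_minus d lam (- CV d l0) p -> Vneg d lam p.
Proof.
  unfold horoball_xi_minus. intros Hp. split.
  - apply Vset_iff. intros i Hi. apply Rnot_lt_le. intros Hx.
    assert (Hwide : exp (lam i * (fst p - 1) / 2) / 2 < Rabs (snd p i)).
    { assert (exp (lam i * (fst p - 1) / 2) <= exp (lam i * fst p / 2))
        by (apply exp_le_exp_compat; pose proof (Hpos i Hi); nra).
      pose proof (exp_pos (lam i * (fst p - 1) / 2)). lra. }
    pose proof (Rbar_le_trans _ _ _ (busemann_ge_of_wide_uniform p i Hi Hwide) Hp).
    cbn [Rbar_le] in *. lra.
  - apply Rnot_lt_le. intros Hy.
    pose proof (Rbar_le_trans _ _ _ (busemann_ge_height d lam Hd p) Hp).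
    cbn [Rbar_le] in *. lra.
Qed.

Lemma Vneg_sub_horoball (p : point) : Vneg d lam p -> horoball_xi_minus d lam (CV d l0) p.
Proof.
  intros [HV Hy]. rewrite Vset_iff in HV. unfold horoball_xi_minus.
  eapply Rbar_le_trans; [apply (busemann_le_of_narrow d lam Hd p); [lra|] | exact CV_ge].
  intros i Hi. specialize (HV i Hi).
  assert (exp (lam i * fst p / 2) <= exp (lam i * (fst p + 1) / 2))
    by (apply exp_le_exp_compat; pose proof (Hpos i Hi); nra).
  pose proof (exp_pos (lam i * (fst p + 1) / 2)). lra.
Qed.

Lemma boundary_Vneg_busemann_bounds (p : point) : boundary d (Vneg d lam) p ->
  Rbar_le (- CV d l0) (busemann_xi_minus d lam p) /\
  Rbar_le (busemann_xi_minus d lam p) (CV d l0).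
Proof.
  intros [Hin Hout]. set (y := fst p).
  destruct (ex_pos_le_all d (fun i => exp (lam i * (y - 1) / 2) / 2)) as (eps0 & Heps0 & Hle0).
  { intros. pose proof (exp_pos (lam i * (y - 1) / 2)). lra. }
  set (eps := Rmin eps0 (1 / 2)).
  assert (Heps : 0 < eps) by (apply Rmin_glb_lt; lra).
  assert (Heps1 : eps < 1) by (pose proof (Rmin_r eps0 (1 / 2)); fold eps in H; lra).
  assert (Hlow_eps : forall i, (i < d)%nat -> eps <= exp (lam i * (y - 1) / 2) / 2)
    by (intros; eapply Rle_trans; [apply Rmin_l | auto]).
  split.
  - destruct (Hout eps Heps) as (q & Hq & Hqy & Hqx). apply Rabs_def2 in Hqy. fold y in Hqy.
    eapply Rbar_le_trans with (- (1 + 32 / l0 ^ 2)); [cbn [Rbar_le]; lra|].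
    destruct (Rle_lt_dec (fst q) 0) as [Hq0 | Hq0].
    + (* [q] leaves [V] through some coordinate, so [p] is almost as wide there *)
      destruct (not_Vset_wide d lam q) as (i & Hi & Hwide); [intros HV; apply Hq; split; auto|].
      apply (busemann_ge_of_wide_uniform p i Hi).
      specialize (Hqx i Hi). specialize (Hlow_eps i Hi).
      assert (exp (lam i * (y - 1) / 2) <= exp (lam i * fst q / 2))
        by (apply exp_le_exp_compat; pose proof (Hpos i Hi); nra).
      pose proof (Rabs_triang_inv (snd q i) (snd p i)). fold y. lra.
    + eapply Rbar_le_trans; [|apply (busemann_ge_height d lam Hd p)].
      cbn [Rbar_le]. fold y. lra.
  - destruct (Hin eps Heps) as (q & [HV Hq0] & Hqy & Hqx). apply Rabs_def2 in Hqy. fold y in Hqy.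
    rewrite Vset_iff in HV.
    eapply Rbar_le_trans; [apply (busemann_le_of_narrow d lam Hd p); [fold y; lra|] | exact CV_ge].
    intros i Hi. specialize (HV i Hi). specialize (Hqx i Hi). specialize (Hlow_eps i Hi).
    assert (exp (lam i * fst q / 2) <= exp (lam i * (y + 1) / 2))
      by (apply exp_le_exp_compat; pose proof (Hpos i Hi); nra).
    assert (exp (lam i * (y - 1) / 2) <= exp (lam i * (y + 1) / 2))
      by (apply exp_le_exp_compat; pose proof (Hpos i Hi); nra).
    pose proof (Rabs_triang_inv (snd p i) (snd q i)). rewrite Rabs_minus_sym in Hqx.
    fold y. lra.
Qed.

End Horoballs.

Lemma lam_ge_lam0 (d : nat) (lam : nat -> R) :
  (forall i, (S i < d)%nat -> lam i <= lam (S i)) ->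
  forall i, (i < d)%nat -> lam 0%nat <= lam i.
Proof.
  intros Hmono i. induction i as [|i IH]; intros Hi; [lra|].
  eapply Rle_trans; [apply IH; lia | apply Hmono, Hi].
Qed.

Theorem mainTheorem9 (d : nat) (lam : nat -> R)
  (hd : (1 <= d)%nat)
  (hpos : 0 < lam 0%nat)
  (hmono : forall i, (S i < d)%nat -> lam i <= lam (S i)) :
  exists CV : R, 0 < CV /\
    (forall p : point, horoball_xi_minus d lam (- CV) p -> Vneg d lam p) /\
    (forall p : point, Vneg d lam p -> horoball_xi_minus d lam CV p) /\
    (forall p : point, boundary d (Vneg d lam) p ->
       Rbar_le (- CV) (busemann_xi_minus d lam p) /\
       Rbar_le (busemann_xi_minus d lam p) CV).
Proof.
  pose proof (lam_ge_lam0 d lam hmono) as Hlow.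
  exists (CV d (lam 0%nat)). split; [|split; [|split]].
  - unfold CV. pose proof (pos_INR d).
    assert (0 <= 32 / lam 0%nat ^ 2) by (apply Rdiv_le_0_compat; nra). lra.
  - exact (horoball_sub_Vneg d lam _ hd hpos Hlow).
  - exact (Vneg_sub_horoball d lam _ hd hpos Hlow).
  - exact (boundary_Vneg_busemann_bounds d lam _ hd hpos Hlow).
Qed.
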